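(* (Multiparty cut-elimination in MRL.) Let $n\ge1$ and let $R_1,\ldots,R_n\subseteq\mathcal{R}$ be such that the complements $\overline{R_1},\ldots,\overline{R_n}$ are pairwise disjoint and $\overline{R_1}\cup\cdots\cup\overline{R_n}=\mathcal{R}$. For all sequents $\Gamma_1,\ldots,\Gamma_n$ and every formula $A$ of MRL: if $\Gamma_i, R_i{:}A$ is derivable in MRL for each $1\le i\le n$, then $\Gamma_1,\ldots,\Gamma_n$ is derivable in MRL.
   Context: Fix a nonempty set $\mathcal{R}$ (the set of roles). For $R\subseteq\mathcal{R}$ write $\overline{R}=\mathcal{R}\setminus R$. An ultrafilter $\mathcal{U}$ on $\mathcal{R}$ is a set of subsets of $\mathcal{R}$ such that $\mathcal{R}\in\mathcal{U}$; $R_1\in\mathcal{U}$ and $R_1\subseteq R_2$ imply $R_2\in\mathcal{U}$; $R_1,R_2\in\mathcal{U}$ imply $R_1\cap R_2\in\mathcal{U}$; and for every $R\subseteq\mathcal{R}$, $R\in\mathcal{U}$ or $\overline{R}\in\mathcal{U}$. An endomorphism is any function $f:\mathcal{R}\to\mathcal{R}$, and $f^{-1}(R)$ denotes the preimage of $R$. Fix a first-order language of terms $t$ with variables $x$, and a collection of primitive (atomic) formulas $a$ (which may contain terms). Formulas of MRL: $A ::= a \mid \neg_f(A) \mid A_1\wedge_{\mathcal{U}} A_2 \mid A\supset_{f,\mathcal{U}} B \mid \forall_{\mathcal{U}}(\lambda x.A)$, with $f$ an endomorphism and $\mathcal{U}$ an ultrafilter on $\mathcal{R}$; $x$ is bound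 in $\forall_{\mathcal{U}}(\lambda x.A)$, and $A[t/x]$ is capture-avoiding substitution. An i-formula is a pair $R{:}A$ with $R\subseteq\mathcal{R}$ and $A$ a formula; a sequent is a finite multiset of i-formulas, and comma denotes multiset union. Derivability in MRL is given by the rules (premises $\Rightarrow$ conclusion, $\Gamma,\Gamma_1,\Gamma_2$ arbitrary sequents): (Id) $\Gamma, R_1{:}a,\ldots,R_n{:}a$ is derivable whenever $n\ge1$ and $R_1,\ldots,R_n$ are pairwise disjoint with union $\mathcal{R}$; (Weaken) $\Gamma,R{:}A,R{:}A \Rightarrow \Gamma,R{:}A$; ($\neg$) $\Gamma, f^{-1}(R){:}A \Rightarrow \Gamma, R{:}\neg_f(A)$; ($\wedge$-neg-l) if $R\notin\mathcal{U}$: $\Gamma,R{:}A\Rightarrow\Gamma,R{:}A\wedge_{\mathcal{U}}B$; ($\wedge$-neg-r) if $R\notin\mathcal{U}$: $\Gamma,R{:}B\Rightarrow\Gamma,R{:}A\wedge_{\mathcal{U}}B$; ($\wedge$-pos) if $R\in\mathcal{U}$: $(\Gamma,R{:}A;\ \Gamma,R{:}B)\Rightarrow\Gamma,R{:}A\wedge_{\mathcal{U}}B$; ($\supset$-neg) if $R\notin\mathcal{U}$: $\Gamma,f^{-1}(R){:}A,R{:}B\Rightarrow\Gamma,R{:}A\supset_{f,\mathcal{U}}B$; ($\supset$-pos) if $R\in\mathcal{U}$: $(\Gamma_1,f^{-1}(R){:}A;\ \Gamma_2,R{:}B)\Rightarrow\Gamma_1,\Gamma_2,R{:}A\supset_{f,\mathcal{U}}B$;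 ($\forall$-neg) if $R\notin\mathcal{U}$ and $t$ is a term: $\Gamma,R{:}A[t/x]\Rightarrow\Gamma,R{:}\forall_{\mathcal{U}}(\lambda x.A)$; ($\forall$-pos) if $R\in\mathcal{U}$ and $x$ has no free occurrence in $\Gamma$: $\Gamma,R{:}A\Rightarrow\Gamma,R{:}\forall_{\mathcal{U}}(\lambda x.A)$. A sequent is derivable in MRL if it is the conclusion of a finite derivation tree built from these rules. *)

From Stdlib Require Import List Arith Permutation.
Import ListNotations.

Section MRL.

Variable Role : Type.
Variable fsym : Type.
Variable psym : Type.

Definition rset := Role -> Prop.
Definition rsubset (R1 R2 : rset) : Prop := forall r, R1 r -> R2 r.
Definition rinter (R1 R2 : rset) : rset := fun r => R1 r /\ R2 r.
Definition rcompl (R : rset) : rset := fun r => ~ R r.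
Definition rfull : rset := fun _ => True.
Definition preim (f : Role -> Role) (R : rset) : rset := fun r => R (f r).

Definition is_ultrafilter (U : rset -> Prop) : Prop :=
  U rfull /\
  (forall R1 R2, U R1 -> rsubset R1 R2 -> U R2) /\
  (forall R1 R2, U R1 -> U R2 -> U (rinter R1 R2)) /\
  (forall R, U R \/ U (rcompl R)).

Record ultrafilter := mkUltrafilter {
  uf_mem : rset -> Prop;
  uf_prop : is_ultrafilter uf_mem }.

(* First-order terms, locally nameless: free variables [tfvar x] and
   bound variables [tbvar i] (de Bruijn indices). *)
Inductive term : Type :=
| tfvar : nat -> term
| tbvar : nat -> term
| tapp : fsym -> list term -> term.

Inductive atom : Type :=
| mkatom : psym -> list term -> atom.

(* Formulas of MRL.  In [fall U A] the body [A] binds the index 0. *)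
Inductive formula : Type :=
| fatom : atom -> formula
| fneg : (Role -> Role) -> formula -> formula
| fand : ultrafilter -> formula -> formula -> formula
| fimp : (Role -> Role) -> ultrafilter -> formula -> formula -> formula
| fall : ultrafilter -> formula -> formula.

Fixpoint open_term (k : nat) (u : term) (t : term) : term :=
  match t with
  | tfvar x => tfvar x
  | tbvar i => if Nat.eqb i k then u else tbvar i
  | tapp f ts => tapp f (map (open_term k u) ts)
  end.

Definition open_atom (k : nat) (u : term) (a : atom) : atom :=
  match a with mkatom p ts => mkatom p (map (open_term k u) ts) end.

Fixpoint open_form (k : nat) (u : term) (A : formula) : formula :=
  match A with
  | fatom a => fatom (open_atom k u a)
  | fneg f B => fneg f (open_form k u B)
  | fand U B C => fand U (open_form k u B) (open_form k u C)
  | fimp f U B C => fimp f U (open_form k u B) (open_form k u C)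
  | fall U B => fall U (open_form (S k) u B)
  end.

(* [A[t/x]] for the body of a quantifier. *)
Definition instantiate (A : formula) (t : term) : formula := open_form 0 t A.

Fixpoint lc_term_at (k : nat) (t : term) : Prop :=
  match t with
  | tfvar _ => True
  | tbvar i => i < k
  | tapp _ ts => (fix all_lc (l : list term) : Prop :=
                    match l with
                    | [] => True
                    | t' :: l' => lc_term_at k t' /\ all_lc l'
                    end) ts
  end.

Definition lc_atom_at (k : nat) (a : atom) : Prop :=
  match a with mkatom _ ts => Forall (lc_term_at k) ts end.

Fixpoint lc_form_at (k : nat) (A : formula) : Prop :=
  match A with
  | fatom a => lc_atom_at k a
  | fneg _ B => lc_form_at k B
  | fand _ B C => lc_form_at k B /\ lc_form_at k C
  | fimp _ _ B C => lc_form_at k B /\ lc_form_at k C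
  | fall _ B => lc_form_at (S k) B
  end.

Definition is_term (t : term) : Prop := lc_term_at 0 t.
Definition is_formula (A : formula) : Prop := lc_form_at 0 A.

Fixpoint occurs_term (x : nat) (t : term) : Prop :=
  match t with
  | tfvar y => y = x
  | tbvar _ => False
  | tapp _ ts => (fix ex_occ (l : list term) : Prop :=
                    match l with
                    | [] => False
                    | t' :: l' => occurs_term x t' \/ ex_occ l'
                    end) ts
  end.

Definition occurs_atom (x : nat) (a : atom) : Prop :=
  match a with mkatom _ ts => Exists (occurs_term x) ts end.

Fixpoint occurs_form (x : nat) (A : formula) : Prop :=
  match A with
  | fatom a => occurs_atom x a
  | fneg _ B => occurs_form x B
  | fand _ B C => occurs_form x B \/ occurs_form x C
  | fimp _ _ B C => occurs_form x B \/ occurs_form x C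
  | fall _ B => occurs_form x B
  end.

(* i-formulas and sequents (finite multisets, represented as lists
   modulo permutation: see rule [d_exch]). *)
Definition iformula := (rset * formula)%type.
Definition sequent := list iformula.

Definition occurs_seq (x : nat) (G : sequent) : Prop :=
  exists p, In p G /\ occurs_form x (snd p).

Definition is_partition (Rs : list rset) : Prop :=
  (forall i j r, i < length Rs -> j < length Rs -> i <> j ->
     nth i Rs rfull r -> nth j Rs rfull r -> False) /\
  (forall r, exists R, In R Rs /\ R r).

Inductive derivable : sequent -> Prop :=
| d_exch : forall G D, Permutation G D -> derivable G -> derivable D
| d_id : forall G (Rs : list rset) (a : atom),
    Rs <> [] -> is_partition Rs ->
    derivable (map (fun R => (R, fatom a)) Rs ++ G)
| d_weaken : forall G R A,
    derivable ((R, A) :: (R, A) :: G) -> derivable ((R, A) :: G)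
| d_neg : forall G R f A,
    derivable ((preim f R, A) :: G) -> derivable ((R, fneg f A) :: G)
| d_and_neg_l : forall G R U A B, ~ uf_mem U R ->
    derivable ((R, A) :: G) -> derivable ((R, fand U A B) :: G)
| d_and_neg_r : forall G R U A B, ~ uf_mem U R ->
    derivable ((R, B) :: G) -> derivable ((R, fand U A B) :: G)
| d_and_pos : forall G R U A B, uf_mem U R ->
    derivable ((R, A) :: G) -> derivable ((R, B) :: G) ->
    derivable ((R, fand U A B) :: G)
| d_imp_neg : forall G R f U A B, ~ uf_mem U R ->
    derivable ((preim f R, A) :: (R, B) :: G) ->
    derivable ((R, fimp f U A B) :: G)
| d_imp_pos : forall G1 G2 R f U A B, uf_mem U R ->
    derivable ((preim f R, A) :: G1) -> derivable ((R, B) :: G2) ->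
    derivable ((R, fimp f U A B) :: G1 ++ G2)
| d_all_neg : forall G R U A t, ~ uf_mem U R -> is_term t ->
    derivable ((R, instantiate A t) :: G) ->
    derivable ((R, fall U A) :: G)
| d_all_pos : forall G R U A x, uf_mem U R ->
    ~ occurs_seq x G -> ~ occurs_form x A ->
    derivable ((R, instantiate A (tfvar x)) :: G) ->
    derivable ((R, fall U A) :: G).

End MRL.

Arguments derivable {Role fsym psym}.
Arguments is_formula {Role fsym psym}.
Arguments rcompl {Role}.
Arguments rfull {Role}.

(* The theorem is proved for a multicut in which the i-th premise may contain
   several copies of R_i:A (this absorbs contraction), by induction on the size
   of A and, inside it, on the sum of the heights of the derivations of the
   premises.  If the last rule of some premise acts on a side formula, it
   permutes below the multicut.  Otherwise every premise ends with a rule on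
   R_i:A.  Since the complements of the R_i are pairwise disjoint, at most one
   R_i lies outside a given ultrafilter, so at most one premise ends with a
   "negative" rule, and the multicut reduces to multicuts on the immediate
   subformulas of A.  For an atom, the identity axioms of the premises glue into
   one: the sets other than R_i in the i-th axiom together partition the roles. *)

From Stdlib Require Import List Arith Permutation Lia Classical.
Import ListNotations.

Arguments tfvar {fsym}. Arguments tbvar {fsym}. Arguments tapp {fsym}.
Arguments mkatom {fsym psym}.
Arguments fatom {Role fsym psym}. Arguments fneg {Role fsym psym}.
Arguments fand {Role fsym psym}. Arguments fimp {Role fsym psym}.
Arguments fall {Role fsym psym}.
Arguments open_term {fsym}. Arguments instantiate {Role fsym psym}.
Arguments lc_term_at {fsym}. Arguments is_term {fsym}.
Arguments occurs_term {fsym}. Arguments occurs_form {Role fsym psym}.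
Arguments occurs_seq {Role fsym psym}.
Arguments is_partition {Role}. Arguments preim {Role}.
Arguments uf_mem {Role}. Arguments uf_prop {Role}.
Arguments d_exch {Role fsym psym}. Arguments d_id {Role fsym psym}.
Arguments d_weaken {Role fsym psym}. Arguments d_neg {Role fsym psym}.
Arguments d_and_neg_l {Role fsym psym}. Arguments d_and_neg_r {Role fsym psym}.
Arguments d_and_pos {Role fsym psym}. Arguments d_imp_neg {Role fsym psym}.
Arguments d_imp_pos {Role fsym psym}. Arguments d_all_neg {Role fsym psym}.
Arguments d_all_pos {Role fsym psym}.

Definition upd {X} (F : nat -> X) (i : nat) (x : X) : nat -> X :=
  fun j => if Nat.eqb j i then x else F j.

Lemma upd_eq {X} (F : nat -> X) i x : upd F i x i = x.
Proof. unfold upd. now rewrite Nat.eqb_refl. Qed.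

Lemma upd_neq {X} (F : nat -> X) i x j : j <> i -> upd F i x j = F j.
Proof. unfold upd. intros H. now destruct (Nat.eqb_spec j i). Qed.

(* A small decision procedure for [Permutation] goals between concatenations
   of list variables and single elements: each block of the left-hand side is
   moved to the front of the right-hand side in turn. *)
Section PermutationSolver.
Context {T : Type}.

Lemma perm_front_cons (x c : T) L E :
  Permutation L (x :: E) -> Permutation (c :: L) (x :: c :: E).
Proof. intros ->. apply perm_swap. Qed.

Lemma perm_front_app (x : T) B L E :
  Permutation L (x :: E) -> Permutation (B ++ L) (x :: B ++ E).
Proof. intros ->. symmetry. apply Permutation_middle. Qed.

Lemma perm_front_nil (B : list T) : Permutation B (B ++ []).
Proof. now rewrite app_nil_r. Qed.

Lemma perm_front_block_cons (c : T) B L E :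
  Permutation L (B ++ E) -> Permutation (c :: L) (B ++ c :: E).
Proof. intros ->. apply Permutation_middle. Qed.

Lemma perm_front_block_app (C B L E : list T) :
  Permutation L (B ++ E) -> Permutation (C ++ L) (B ++ C ++ E).
Proof. intros ->. rewrite !app_assoc. apply Permutation_app_tail, Permutation_app_comm. Qed.

Lemma perm_match_cons (x : T) L R R' :
  Permutation R (x :: R') -> Permutation L R' -> Permutation (x :: L) R.
Proof. now intros -> ->. Qed.

Lemma perm_match_app (B L R R' : list T) :
  Permutation R (B ++ R') -> Permutation L R' -> Permutation (B ++ L) R.
Proof. now intros -> ->. Qed.

Lemma perm_match_last (B R R' : list T) :
  Permutation R (B ++ R') -> Permutation [] R' -> Permutation B R.
Proof. intros -> H. apply Permutation_nil in H as ->. now rewrite app_nil_r. Qed.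

End PermutationSolver.

Ltac perm_front :=
  first [ apply Permutation_refl
        | apply perm_front_nil
        | eapply perm_front_cons; perm_front
        | eapply perm_front_app; perm_front
        | eapply perm_front_block_cons; perm_front
        | eapply perm_front_block_app; perm_front ].

Ltac perm_match :=
  first [ apply Permutation_refl
        | eapply perm_match_cons; [perm_front | perm_match]
        | eapply perm_match_app; [perm_front | perm_match]
        | eapply perm_match_last; [perm_front | apply Permutation_refl] ].

Ltac psolve :=
  repeat (rewrite <- ?app_assoc, <- ?app_comm_cons); rewrite ?app_nil_r; perm_match.

Section Indexed.
Context {X : Type}.
Implicit Types (F : nat -> list X) (L : list X).

Definition concat_except F n i : list X :=
  concat (map F (seq 0 i)) ++ concat (map F (seq (S i) (n - S i))).

Lemma seq_split n i : i < n -> seq 0 n = seq 0 i ++ i :: seq (S i) (n - S i).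
Proof. intros H. replace n with (i + S (n - S i)) at 1 by lia. now rewrite seq_app. Qed.

Lemma concat_seq_split F n i : i < n ->
  Permutation (concat (map F (seq 0 n))) (F i ++ concat_except F n i).
Proof.
  intros H. rewrite (seq_split n i H), map_app, concat_app.
  unfold concat_except. simpl. psolve.
Qed.

Lemma concat_except_upd F n i L : concat_except (upd F i L) n i = concat_except F n i.
Proof.
  unfold concat_except. f_equal; f_equal; apply map_ext_in;
    intros j Hj; apply in_seq in Hj; apply upd_neq; lia.
Qed.

Lemma concat_seq_upd F n i L : i < n ->
  Permutation (concat (map (upd F i L) (seq 0 n))) (L ++ concat_except F n i).
Proof. intros H. now rewrite (concat_seq_split _ n i H), upd_eq, concat_except_upd. Qed.

Lemma incl_concat_const L l : incl (concat (map (fun _ : nat => L) l)) L.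
Proof.
  intros x Hx. apply in_concat in Hx as (L' & HL' & Hx).
  apply in_map_iff in HL' as (? & <- & _). exact Hx.
Qed.

Lemma concat_map_perm F F' l : (forall i, In i l -> Permutation (F i) (F' i)) ->
  Permutation (concat (map F l)) (concat (map F' l)).
Proof. induction l; simpl; intros H; auto using Permutation_app. Qed.

Lemma concat_map_app F F' l :
  Permutation (concat (map (fun i => F i ++ F' i) l)) (concat (map F l) ++ concat (map F' l)).
Proof. induction l as [|i l IH]; simpl; auto. rewrite IH. psolve. Qed.

End Indexed.

Lemma sum_upd_lt (hs : nat -> nat) n i h : i < n -> h < hs i ->
  list_sum (map (upd hs i h) (seq 0 n)) < list_sum (map hs (seq 0 n)).
Proof.
  intros Hi Hh. rewrite (seq_split n i Hi), !map_app, !list_sum_app. simpl.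
  rewrite upd_eq.
  assert (Hout : forall l, ~ In i l -> map (upd hs i h) l = map hs l).
  { intros l Hl. apply map_ext_in. intros j Hj. apply upd_neq. congruence. }
  rewrite !Hout; [lia | |]; rewrite in_seq; lia.
Qed.

Lemma finite_choice {X} (d : X) n (P : nat -> X -> Prop) :
  (forall i, i < n -> exists x, P i x) -> exists f, forall i, i < n -> P i (f i).
Proof.
  induction n as [|n IH]; intros H; [exists (fun _ => d); lia|].
  destruct IH as [f Hf]; [intros i Hi; apply H; lia|].
  destruct (H n (Nat.lt_succ_diag_r n)) as [x Hx].
  exists (upd f n x). intros i Hi. destruct (Nat.eq_dec i n) as [->|Hne].
  - now rewrite upd_eq.
  - rewrite upd_neq by exact Hne. apply Hf. lia.
Qed.

Section Multisets.
Context {X : Type}.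
Implicit Types (L G : list X).

Lemma Permutation_cons_repeat_inv (y z : X) k L G :
  Permutation (y :: L) (repeat z k ++ G) ->
  (y = z /\ 1 <= k /\ Permutation L (repeat z (k - 1) ++ G)) \/
  (exists G', Permutation G (y :: G') /\ Permutation L (repeat z k ++ G')).
Proof.
  intros HP. assert (Hin : In y (repeat z k ++ G)) by (rewrite <- HP; now left).
  apply in_app_or in Hin as [Hin|Hin].
  - left. destruct k as [|k]; [contradiction|]. apply repeat_spec in Hin as ->.
    split; [reflexivity | split; [lia|]]. simpl in HP |- *. rewrite Nat.sub_0_r.
    now apply Permutation_cons_inv in HP.
  - right. apply in_split in Hin as (G1 & G2 & ->). exists (G1 ++ G2). split; [psolve|].
    rewrite app_assoc. apply (@Permutation_cons_app_inv _ _ _ _ y). rewrite HP. psolve.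
Qed.

Lemma Permutation_app_repeat_inv (z : X) L1 L2 k G :
  Permutation (L1 ++ L2) (repeat z k ++ G) ->
  exists k1 k2 G1 G2, k = k1 + k2 /\ Permutation G (G1 ++ G2) /\
    Permutation L1 (repeat z k1 ++ G1) /\ Permutation L2 (repeat z k2 ++ G2).
Proof.
  revert k G. induction L1 as [|y L1 IH]; intros k G HP.
  - now exists 0, k, [], G.
  - apply Permutation_cons_repeat_inv in HP as [(-> & Hk & HP)|(G' & HG & HP)];
      destruct (IH _ _ HP) as (k1 & k2 & G1 & G2 & Ek & HG12 & H1 & H2).
    + exists (S k1), k2, G1, G2. repeat split; auto; [lia|]. simpl. now apply perm_skip.
    + exists k1, k2, (y :: G1), G2. repeat split; auto.
      * now rewrite HG, HG12.
      * rewrite H1. psolve.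
Qed.

Lemma ForallOrdPairs_perm (Rel : X -> X -> Prop) L L' :
  (forall x y, Rel x y -> Rel y x) -> Permutation L L' ->
  ForallOrdPairs Rel L -> ForallOrdPairs Rel L'.
Proof.
  intros Hsym HP. induction HP as [|x L L' HP IH|x y L|]; auto.
  - intros H. inversion_clear H. constructor; [|auto]. eapply Permutation_Forall; eauto.
  - intros H. inversion_clear H as [|? ? Hy H']. inversion_clear H' as [|? ? Hx H''].
    inversion_clear Hy. repeat constructor; auto.
Qed.

Lemma ForallOrdPairs_app_inv_r (Rel : X -> X -> Prop) L1 L2 :
  ForallOrdPairs Rel (L1 ++ L2) -> ForallOrdPairs Rel L2.
Proof. induction L1; simpl; [auto|]. inversion_clear 1. auto. Qed.

Lemma ForallOrdPairs_app (Rel : X -> X -> Prop) L1 L2 :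
  ForallOrdPairs Rel L1 -> ForallOrdPairs Rel L2 ->
  (forall x y, In x L1 -> In y L2 -> Rel x y) -> ForallOrdPairs Rel (L1 ++ L2).
Proof.
  induction L1 as [|x L1 IH]; simpl; [auto|]. inversion_clear 1. intros H2 H12.
  constructor; [apply Forall_app; split|]; auto.
  apply Forall_forall. auto.
Qed.

Lemma ForallOrdPairs_concat (Rel : X -> X -> Prop) (Ls : list (list X)) :
  Forall (ForallOrdPairs Rel) Ls ->
  ForallOrdPairs (fun L L' => forall x y, In x L -> In y L' -> Rel x y) Ls ->
  ForallOrdPairs Rel (concat Ls).
Proof.
  induction Ls as [|L Ls IH]; simpl; [constructor|].
  inversion_clear 1. inversion_clear 1 as [|? ? Hcross H'].
  apply ForallOrdPairs_app; auto.
  intros x y Hx Hy. apply in_concat in Hy as (L' & HL' & Hy).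
  rewrite Forall_forall in Hcross. eauto.
Qed.

End Multisets.

Lemma ForallOrdPairs_map_NoDup {I X} (Rel : X -> X -> Prop) (f : I -> X) l : NoDup l ->
  (forall i j, In i l -> In j l -> i <> j -> Rel (f i) (f j)) -> ForallOrdPairs Rel (map f l).
Proof.
  induction 1 as [|i l Hi Hl IH]; simpl; intros H; constructor.
  - apply Forall_map, Forall_forall. intros j Hj. apply H; simpl; auto. congruence.
  - apply IH. intros; apply H; simpl; auto.
Qed.

Section Syntax.
Context {Role fsym psym : Type}.
Notation term := (term fsym).
Notation formula := (formula Role fsym psym).
Notation sequent := (sequent Role fsym psym).
Implicit Types (t u : term) (A B : formula) (G : sequent) (s : nat -> term).

Fixpoint term_nested_ind (P : term -> Prop) (Hf : forall x, P (tfvar x))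
  (Hb : forall i, P (tbvar i)) (Ha : forall f ts, Forall P ts -> P (tapp f ts))
  (t : term) {struct t} : P t :=
  match t with
  | tfvar x => Hf x
  | tbvar i => Hb i
  | tapp f ts => Ha f ts ((fix go (l : list term) : Forall P l :=
      match l with
      | [] => Forall_nil _
      | t' :: l' => Forall_cons _ (term_nested_ind P Hf Hb Ha t') (go l')
      end) ts)
  end.

Lemma lc_term_at_tapp k (f : fsym) (ts : list term) :
  lc_term_at k (tapp f ts) <-> Forall (lc_term_at k) ts.
Proof.
  induction ts as [|t ts IH]; simpl in *; [now split|].
  rewrite Forall_cons_iff, <- IH. tauto.
Qed.

Lemma occurs_term_tapp x (f : fsym) (ts : list term) :
  occurs_term x (tapp f ts) <-> Exists (occurs_term x) ts.
Proof.
  induction ts as [|t ts IH]; simpl in *; [split; [tauto | inversion 1]|].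
  rewrite Exists_cons, <- IH. tauto.
Qed.

Fixpoint tsubst s t : term :=
  match t with
  | tfvar x => s x
  | tbvar i => tbvar i
  | tapp f ts => tapp f (map (tsubst s) ts)
  end.

Definition asubst s (a : atom fsym psym) : atom fsym psym :=
  match a with mkatom p ts => mkatom p (map (tsubst s) ts) end.

Fixpoint fsubst s A : formula :=
  match A with
  | fatom a => fatom (asubst s a)
  | fneg f B => fneg f (fsubst s B)
  | fand U B C => fand U (fsubst s B) (fsubst s C)
  | fimp f U B C => fimp f U (fsubst s B) (fsubst s C)
  | fall U B => fall U (fsubst s B)
  end.

Definition isubst s (p : iformula Role fsym psym) : iformula Role fsym psym :=
  (fst p, fsubst s (snd p)).

Definition ssubst s G : sequent := map (isubst s) G.

Lemma ssubst_cons s R A G : ssubst s ((R, A) :: G) = (R, fsubst s A) :: ssubst s G.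
Proof. reflexivity. Qed.

Definition closed_subst s := forall x, is_term (s x).

Lemma open_term_closed t k u : is_term t -> open_term k u t = t.
Proof.
  unfold is_term. induction t as [x|i|f ts IH] using term_nested_ind; intros Ht.
  - easy.
  - simpl in Ht. lia.
  - apply lc_term_at_tapp in Ht. simpl. f_equal. rewrite <- map_id.
    apply map_ext_Forall. induction IH; inversion Ht; auto.
Qed.

Lemma tsubst_open_term s t k u : closed_subst s ->
  tsubst s (open_term k u t) = open_term k (tsubst s u) (tsubst s t).
Proof.
  intros Hs. induction t as [x|i|f ts IH] using term_nested_ind; simpl.
  - now rewrite open_term_closed.
  - now destruct (Nat.eqb i k).
  - f_equal. rewrite !map_map. now apply map_ext_Forall.
Qed.

Lemma fsubst_instantiate s A u : closed_subst s ->
  fsubst s (instantiate A u) = instantiate (fsubst s A) (tsubst s u).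
Proof.
  intros Hs. unfold instantiate. generalize 0.
  induction A as [[p ts]| | | |]; intros k; simpl; f_equal; auto.
  f_equal. rewrite !map_map. apply map_ext. intros t. now apply tsubst_open_term.
Qed.

Lemma tsubst_is_term s t : closed_subst s -> is_term t -> is_term (tsubst s t).
Proof.
  intros Hs. unfold is_term.
  induction t as [x|i|f ts IH] using term_nested_ind; intros Ht; [apply Hs|exact Ht|].
  simpl tsubst. rewrite lc_term_at_tapp, Forall_map. rewrite lc_term_at_tapp in Ht.
  induction IH; inversion Ht; auto.
Qed.

Lemma tsubst_ext s s' t :
  (forall x, occurs_term x t -> s x = s' x) -> tsubst s t = tsubst s' t.
Proof.
  induction t as [x|i|f ts IH] using term_nested_ind; simpl; intros H; auto.
  f_equal. apply map_ext_Forall. induction IH as [|t ts Ht _ IHts]; constructor.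
  - apply Ht. intros x Hx. apply H. now left.
  - apply IHts. intros x Hx. apply H. now right.
Qed.

Lemma fsubst_ext s s' A :
  (forall x, occurs_form x A -> s x = s' x) -> fsubst s A = fsubst s' A.
Proof.
  induction A as [[p ts]| | | |]; simpl; intros H; f_equal; auto.
  f_equal. apply map_ext_in. intros t Ht. apply tsubst_ext.
  intros x Hx. apply H, Exists_exists. eauto.
Qed.

Lemma ssubst_ext s s' G :
  (forall x, occurs_seq x G -> s x = s' x) -> ssubst s G = ssubst s' G.
Proof.
  intros H. apply map_ext_in. intros [R A] HA. unfold isubst. simpl. f_equal.
  apply fsubst_ext. intros x Hx. apply H. now exists (R, A).
Qed.

Lemma tsubst_tfvar t : tsubst tfvar t = t.
Proof.
  induction t as [x|i|f ts IH] using term_nested_ind; simpl; f_equal.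
  transitivity (map (fun t => t) ts); [now apply map_ext_Forall | apply map_id].
Qed.

Lemma fsubst_tfvar A : fsubst tfvar A = A.
Proof.
  induction A as [[p ts]| | | |]; simpl; f_equal; auto.
  f_equal. transitivity (map (fun t => t) ts); [|apply map_id].
  apply map_ext, tsubst_tfvar.
Qed.

Lemma ssubst_tfvar G : ssubst tfvar G = G.
Proof.
  transitivity (map (fun p => p) G); [|apply map_id].
  apply map_ext. intros [R A]. unfold isubst. simpl. now rewrite fsubst_tfvar.
Qed.

Definition bounded (P : nat -> Prop) := exists z, forall x, P x -> x < z.

Lemma bounded_or (P Q : nat -> Prop) :
  bounded P -> bounded Q -> bounded (fun x => P x \/ Q x).
Proof.
  intros [z1 H1] [z2 H2]. exists (max z1 z2).
  intros x [Hx|Hx]; [specialize (H1 x Hx)|specialize (H2 x Hx)]; lia.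
Qed.

Lemma bounded_ext (P Q : nat -> Prop) :
  (forall x, Q x -> P x) -> bounded P -> bounded Q.
Proof. intros HPQ [z Hz]. exists z. auto. Qed.

Lemma bounded_occurs_term t : bounded (fun x => occurs_term x t).
Proof.
  induction t as [y|i|f ts IH] using term_nested_ind.
  - exists (S y). simpl. lia.
  - exists 0. contradiction.
  - apply (bounded_ext (fun x => Exists (occurs_term x) ts));
      [intros x; apply occurs_term_tapp|].
    induction IH as [|t ts Ht _ IHts]; [exists 0; inversion 1|].
    apply (bounded_ext _ _ (fun x H => proj1 (Exists_cons _ _ _) H)), bounded_or; auto.
Qed.

Lemma bounded_occurs_form A : bounded (fun x => occurs_form x A).
Proof.
  induction A as [[p ts]| | | |]; simpl; auto using bounded_or.
  induction ts as [|t ts IH]; [exists 0; inversion 1|].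
  apply (bounded_ext _ _ (fun x H => proj1 (Exists_cons _ _ _) H)),
    bounded_or, IH. apply bounded_occurs_term.
Qed.

Lemma occurs_seq_cons x p G :
  occurs_seq x (p :: G) <-> occurs_form x (snd p) \/ occurs_seq x G.
Proof.
  split.
  - intros [q [[<-|Hq] Hx]]; [now left | right; now exists q].
  - intros [Hx|[q [Hq Hx]]]; [exists p | exists q]; simpl; auto.
Qed.

Lemma occurs_seq_incl x G G' : incl G G' -> occurs_seq x G -> occurs_seq x G'.
Proof. intros HG [p [Hp Hx]]. exists p. auto. Qed.

Lemma exists_fresh G : exists z, ~ occurs_seq z G.
Proof.
  enough (Hb : bounded (fun x => occurs_seq x G)).
  { destruct Hb as [z Hz]. exists z. intros H. specialize (Hz z H). lia. }
  induction G as [|p G IH]; [exists 0; now intros x [? []]|].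
  eapply bounded_ext; [intros x; apply occurs_seq_cons|].
  apply bounded_or; [apply bounded_occurs_form | exact IH].
Qed.

Lemma closed_subst_upd s y t : closed_subst s -> is_term t -> closed_subst (upd s y t).
Proof. intros Hs Ht x. unfold upd. now destruct (Nat.eqb x y). Qed.

Lemma fsubst_upd_fresh s y t A : ~ occurs_form y A -> fsubst (upd s y t) A = fsubst s A.
Proof.
  intros Hy. apply fsubst_ext. intros x Hx. unfold upd.
  destruct (Nat.eqb_spec x y); congruence.
Qed.

Lemma ssubst_upd_fresh s y t G : ~ occurs_seq y G -> ssubst (upd s y t) G = ssubst s G.
Proof.
  intros Hy. apply ssubst_ext. intros x Hx. unfold upd.
  destruct (Nat.eqb_spec x y); congruence.
Qed.

Lemma fsubst_upd_instantiate s y t A : closed_subst s -> is_term t -> ~ occurs_form y A ->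
  fsubst (upd s y t) (instantiate A (tfvar y)) = instantiate (fsubst s A) t.
Proof.
  intros Hs Ht Hy. rewrite fsubst_instantiate by now apply closed_subst_upd.
  rewrite fsubst_upd_fresh by exact Hy. simpl. now rewrite upd_eq.
Qed.

Fixpoint fsize A : nat :=
  match A with
  | fatom _ => 0
  | fneg _ B => S (fsize B)
  | fand _ B C => S (fsize B + fsize C)
  | fimp _ _ B C => S (fsize B + fsize C)
  | fall _ B => S (fsize B)
  end.

Lemma fsize_instantiate A u : fsize (instantiate A u) = fsize A.
Proof. unfold instantiate. generalize 0. induction A; intros k; simpl; auto. Qed.

End Syntax.

Section Derivations.
Context {Role fsym psym : Type}.
Notation formula := (formula Role fsym psym).
Notation iformula := (iformula Role fsym psym).
Notation sequent := (sequent Role fsym psym).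
Implicit Types (A B : formula) (D E G M : sequent) (s : nat -> term fsym).

Definition atomic (a : atom fsym psym) (R : rset Role) : iformula := (R, fatom a).

(* [mrl_rule Ps p G]: the rules other than (Id), with premises [Ps] and
   conclusion [p :: G], [p] being the principal i-formula.  The paper's (Weaken)
   is contraction. *)
Inductive mrl_rule : list sequent -> iformula -> sequent -> Prop :=
| rule_weaken G R A : mrl_rule [(R, A) :: (R, A) :: G] (R, A) G
| rule_neg G R f A : mrl_rule [(preim f R, A) :: G] (R, fneg f A) G
| rule_and_neg_l G R U A B :
    ~ uf_mem U R -> mrl_rule [(R, A) :: G] (R, fand U A B) G
| rule_and_neg_r G R U A B :
    ~ uf_mem U R -> mrl_rule [(R, B) :: G] (R, fand U A B) G
| rule_and_pos G R U A B :
    uf_mem U R -> mrl_rule [(R, A) :: G; (R, B) :: G] (R, fand U A B) G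
| rule_imp_neg G R f U A B : ~ uf_mem U R ->
    mrl_rule [(preim f R, A) :: (R, B) :: G] (R, fimp f U A B) G
| rule_imp_pos G1 G2 R f U A B : uf_mem U R ->
    mrl_rule [(preim f R, A) :: G1; (R, B) :: G2] (R, fimp f U A B) (G1 ++ G2)
| rule_all_neg G R U A t : ~ uf_mem U R -> is_term t ->
    mrl_rule [(R, instantiate A t) :: G] (R, fall U A) G
| rule_all_pos G R U A x : uf_mem U R -> ~ occurs_seq x G -> ~ occurs_form x A ->
    mrl_rule [(R, instantiate A (tfvar x)) :: G] (R, fall U A) G.

(* [hderivable h D]: [D] has a derivation of height at most [h].  Exchange is
   built into every rule, so heights are invariant under permutation. *)
Inductive hderivable : nat -> sequent -> Prop :=
| hder_id h P a G D : P <> [] -> is_partition P ->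
    Permutation D (map (atomic a) P ++ G) -> hderivable h D
| hder_rule h Ps p G D : mrl_rule Ps p G -> (forall P, In P Ps -> hderivable h P) ->
    Permutation D (p :: G) -> hderivable (S h) D.

Lemma hderivable_perm h D D' : hderivable h D -> Permutation D D' -> hderivable h D'.
Proof.
  intros [h0 P a G D0 HP HPart HD0|h0 Ps p G D0 Hr HPs HD0] HD.
  - eapply hder_id; [exact HP | exact HPart |].
    exact (Permutation_trans (Permutation_sym HD) HD0).
  - eapply hder_rule; [exact Hr | exact HPs |].
    exact (Permutation_trans (Permutation_sym HD) HD0).
Qed.

Lemma hderivable_mono h D h' : hderivable h D -> h <= h' -> hderivable h' D.
Proof.
  intros H. revert h'. induction H as [|h Ps p G D Hr _ IH HD]; intros h' Hle.
  - eapply hder_id; eauto.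
  - destruct h' as [|h']; [lia|]. eapply hder_rule; eauto.
    intros P HP. apply IH; [exact HP | lia].
Qed.

Lemma mrl_rule_derivable Ps p G : mrl_rule Ps p G ->
  (forall P, In P Ps -> derivable P) -> derivable (p :: G).
Proof.
  intros Hr HPs. destruct Hr;
    [ apply d_weaken | apply d_neg | apply d_and_neg_l | apply d_and_neg_r
    | apply d_and_pos | apply d_imp_neg | apply d_imp_pos | eapply d_all_neg
    | eapply d_all_pos ]; eauto; apply HPs; simpl; auto.
Qed.

Lemma hderivable_derivable h D : hderivable h D -> derivable D.
Proof.
  induction 1 as [h P a G D HP HPart HD|h Ps p G D Hr _ IH HD];
    (eapply d_exch; [symmetry; exact HD|]).
  - now apply d_id.
  - now apply (mrl_rule_derivable Ps).
Qed.

Lemma derivable_hderivable D : derivable D -> exists h, hderivable h D.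
Proof.
  assert (Hstep : forall h Ps p G, mrl_rule Ps p G -> Forall (hderivable h) Ps ->
                    hderivable (S h) (p :: G)).
  { intros h Ps p G Hr HPs. eapply hder_rule; [exact Hr | |reflexivity].
    now apply Forall_forall. }
  induction 1; repeat match goal with H : exists _, _ |- _ => destruct H end.
  { eexists. eapply hderivable_perm; eassumption. }
  { exists 0. now apply (hder_id 0 Rs a G). }
  all: match goal with
       | H1 : hderivable ?h1 ?P1, H2 : hderivable ?h2 ?P2 |- _ =>
           exists (S (max h1 h2)); apply (Hstep _ [P1; P2]);
           [econstructor; eassumption
           | repeat constructor; (eapply hderivable_mono; [eassumption | lia])]
       | H1 : hderivable ?h1 ?P1 |- _ =>
           exists (S h1); apply (Hstep _ [P1]); [econstructor; eassumption | auto]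
       end.
Qed.

Lemma ssubst_atomic s a P : ssubst s (map (atomic a) P) = map (atomic (asubst s a)) P.
Proof. unfold ssubst. now rewrite map_map. Qed.

Lemma mrl_rule_subst_weaken s Ps p G E : closed_subst s -> mrl_rule Ps p G ->
  exists Ps' G', mrl_rule Ps' (isubst s p) G' /\ Permutation G' (ssubst s G ++ E) /\
    forall P', In P' Ps' ->
      exists s' P E', closed_subst s' /\ In P Ps /\ P' = ssubst s' P ++ E'.
Proof.
  intros Hs Hr.
  match goal with |- ?goal =>
    assert (Hshared : mrl_rule (map (fun P => ssubst s P ++ E) Ps) (isubst s p)
                        (ssubst s G ++ E) -> goal) end.
  { intros H. do 2 eexists. split; [exact H | split; [reflexivity|]].
    intros P' HP'. apply in_map_iff in HP' as (P & <- & HP). now exists s, P, E. }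
  destruct Hr; unfold isubst in *; simpl in *;
    try (apply Hshared; constructor; assumption).
  - exists [(preim f R, fsubst s A) :: ssubst s G1 ++ E; (R, fsubst s B) :: ssubst s G2],
      ((ssubst s G1 ++ E) ++ ssubst s G2).
    split; [now constructor | split; [unfold ssubst; rewrite map_app; psolve|]].
    intros P' [<-|[<-|[]]]; [now exists s, ((preim f R, A) :: G1), E; simpl; auto|].
    exists s, ((R, B) :: G2), []. rewrite app_nil_r. simpl; auto.
  - exists [(R, instantiate (fsubst s A) (tsubst s t)) :: ssubst s G ++ E], (ssubst s G ++ E).
    split; [constructor; auto using tsubst_is_term | split; [reflexivity|]].
    intros P' [<-|[]]. exists s, ((R, instantiate A t) :: G), E.
    unfold ssubst, isubst. simpl. rewrite fsubst_instantiate; auto.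
  - (* The eigenvariable is renamed apart from [E] and from the substituted terms. *)
    destruct (exists_fresh ((R, fsubst s A) :: ssubst s G ++ E)) as [z Hz].
    rewrite occurs_seq_cons in Hz. simpl in Hz.
    exists [(R, instantiate (fsubst s A) (tfvar z)) :: ssubst s G ++ E], (ssubst s G ++ E).
    split; [constructor; tauto | split; [reflexivity|]].
    intros P' [<-|[]]. exists (upd s x (tfvar z)), ((R, instantiate A (tfvar x)) :: G), E.
    split; [now apply closed_subst_upd | split; [now left|]].
    rewrite <- (fsubst_upd_instantiate s x (tfvar z) A),
      <- (ssubst_upd_fresh s x (tfvar z) G) by first [assumption | exact I].
    reflexivity.
Qed.

Lemma hderivable_subst_weaken h D s E : closed_subst s ->
  hderivable h D -> hderivable h (ssubst s D ++ E).
Proof.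
  intros Hs H. revert s E Hs.
  induction H as [h P a G D HP HPart HD|h Ps p G D Hr _ IH HD]; intros s E Hs.
  - apply (hder_id h P (asubst s a) (ssubst s G ++ E)); auto.
    rewrite app_assoc, <- ssubst_atomic. unfold ssubst. rewrite <- map_app.
    apply Permutation_app_tail, Permutation_map, HD.
  - destruct (mrl_rule_subst_weaken s Ps p G E Hs Hr) as (Ps' & G' & Hr' & HG' & HPs').
    apply (hder_rule h Ps' (isubst s p) G'); [exact Hr'| |].
    + intros P' HP'. destruct (HPs' P' HP') as (s' & P & E' & Hs' & HP & ->). auto.
    + rewrite HG', app_comm_cons. apply Permutation_app_tail, (Permutation_map (isubst s) HD).
Qed.

Lemma hderivable_weaken h D E : hderivable h D -> hderivable h (D ++ E).
Proof.
  intros H. rewrite <- (ssubst_tfvar D).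
  apply hderivable_subst_weaken; [exact (fun _ => I) | exact H].
Qed.

Lemma hderivable_eigen h R A x t G : is_term t -> ~ occurs_form x A -> ~ occurs_seq x G ->
  hderivable h ((R, instantiate A (tfvar x)) :: G) -> hderivable h ((R, instantiate A t) :: G).
Proof.
  intros Ht HA HG H.
  apply (hderivable_subst_weaken _ _ (upd tfvar x t) []) in H;
    [|now apply closed_subst_upd].
  rewrite app_nil_r, ssubst_cons in H.
  now rewrite fsubst_upd_instantiate, fsubst_tfvar, ssubst_upd_fresh, ssubst_tfvar in H.
Qed.

Lemma derivable_weaken D E : derivable D -> derivable (D ++ E).
Proof.
  intros H. apply derivable_hderivable in H as [h H].
  eapply hderivable_derivable, hderivable_weaken, H.
Qed.

Lemma derivable_contract M D : incl M D -> derivable (M ++ D) -> derivable D.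
Proof.
  induction M as [|[R A] M IH]; simpl; intros HM H; [exact H|].
  apply IH; [intros q Hq; apply HM; now right|].
  destruct (in_split (R, A) (M ++ D)) as (L1 & L2 & HL).
  { apply in_or_app. right. apply HM. now left. }
  rewrite HL in H |- *. eapply d_exch, d_weaken, d_exch, H; psolve.
Qed.

End Derivations.

Section Partitions.
Context {Role : Type}.
Implicit Types (R : rset Role) (L : list (rset Role)).

Definition disjoint R R' := forall r, R r -> R' r -> False.

Lemma disjoint_sym R R' : disjoint R R' -> disjoint R' R.
Proof. intros H r H1 H2. exact (H r H2 H1). Qed.

Lemma disjoint_nth_iff L :
  (forall i j r, i < length L -> j < length L -> i <> j ->
     nth i L rfull r -> nth j L rfull r -> False) <-> ForallOrdPairs disjoint L.
Proof.
  induction L as [|R L IH]; simpl; [split; [constructor | intros; lia]|].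
  split.
  - intros H. constructor.
    + apply Forall_forall. intros R' HR' r Hr Hr'.
      apply (In_nth _ _ rfull) in HR' as (j & Hj & <-).
      apply (H 0 (S j) r); simpl; auto; lia.
    + apply IH. intros i j r Hi Hj Hij. apply (H (S i) (S j) r); lia.
  - inversion_clear 1 as [|? ? HR HL]. rewrite Forall_forall in HR.
    intros [|i] [|j] r Hi Hj Hij; simpl; try lia.
    + intros Hr Hr'. apply (HR (nth j L rfull)) with r; auto. apply nth_In. lia.
    + intros Hr Hr'. apply (HR (nth i L rfull)) with r; auto. apply nth_In. lia.
    + apply (proj2 IH HL i j r); lia.
Qed.

Lemma is_partition_iff L : is_partition L <->
  ForallOrdPairs disjoint L /\ (forall r, exists R, In R L /\ R r).
Proof. unfold is_partition. now rewrite disjoint_nth_iff. Qed.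

Lemma is_partition_perm L L' : Permutation L L' -> is_partition L -> is_partition L'.
Proof.
  rewrite !is_partition_iff. intros HP [Hdisj Hcov]. split.
  - eapply ForallOrdPairs_perm; eauto using disjoint_sym.
  - intros r. destruct (Hcov r) as (R & HR & Hr). exists R. split; [|exact Hr].
    now rewrite <- HP.
Qed.

Lemma is_partition_drop_copies R L1 L2 : (forall R', In R' L1 -> R' = R) ->
  is_partition (R :: L1 ++ L2) -> is_partition (R :: L2).
Proof.
  intros Hcopies Hpart. apply (is_partition_perm _ (L1 ++ R :: L2)) in Hpart;
    [|apply Permutation_middle].
  rewrite is_partition_iff in Hpart |- *. destruct Hpart as [Hdisj Hcov]. split.
  - exact (ForallOrdPairs_app_inv_r _ _ _ Hdisj).
  - intros r. destruct (Hcov r) as (R' & HR' & Hr). apply in_app_or in HR' as [HR'|HR'].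
    + exists R. split; [now left|]. now rewrite <- (Hcopies R' HR').
    + now exists R'.
Qed.

Definition compl_partition n (Rs : nat -> rset Role) :=
  (forall i j r, i < n -> j < n -> i <> j -> ~ Rs i r -> ~ Rs j r -> False) /\
  (forall r, exists i, i < n /\ ~ Rs i r).

Lemma compl_partition_preim n Rs f :
  compl_partition n Rs -> compl_partition n (fun i => preim f (Rs i)).
Proof.
  intros [Hdisj Hcov]. split.
  - intros i j r. apply Hdisj.
  - intros r. apply Hcov.
Qed.

Lemma is_partition_cons_disjoint R L R' : is_partition (R :: L) -> In R' L -> disjoint R R'.
Proof.
  rewrite is_partition_iff. intros [Hdisj _] HR'. inversion_clear Hdisj as [|? ? HR _].
  now rewrite Forall_forall in HR; apply HR.
Qed.

Lemma is_partition_concat n Rs (Qs : nat -> list (rset Role)) : compl_partition n Rs ->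
  (forall i, i < n -> is_partition (Rs i :: Qs i)) -> is_partition (concat (map Qs (seq 0 n))).
Proof.
  intros [Hdisj Hcov] HQs. apply is_partition_iff. split.
  - apply ForallOrdPairs_concat.
    + apply Forall_map, Forall_forall. intros i Hi. apply in_seq in Hi.
      destruct (proj1 (is_partition_iff _) (HQs i ltac:(lia))) as [HQ _].
      now inversion_clear HQ.
    + apply ForallOrdPairs_map_NoDup; [apply seq_NoDup|].
      intros i j Hi Hj Hij R R' HR HR' r Hr Hr'. apply in_seq in Hi, Hj.
      apply (Hdisj i j r); [lia | lia | exact Hij | |].
      * intros Hri. exact (is_partition_cons_disjoint _ _ _ (HQs i ltac:(lia)) HR r Hri Hr).
      * intros Hrj. exact (is_partition_cons_disjoint _ _ _ (HQs j ltac:(lia)) HR' r Hrj Hr').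
  - intros r. destruct (Hcov r) as (i & Hi & Hr).
    destruct (proj1 (is_partition_iff _) (HQs i Hi)) as [_ HQcov].
    destruct (HQcov r) as (R & [<-|HR] & HRr); [contradiction|].
    exists R. split; [|exact HRr]. apply in_concat. exists (Qs i).
    split; [apply in_map, in_seq; lia | exact HR].
Qed.

End Partitions.

Section Multicut.
Context {Role fsym psym : Type}.
Notation formula := (formula Role fsym psym).
Notation sequent := (sequent Role fsym psym).
Implicit Types (A B C : formula) (D E G : sequent) (Rs : nat -> rset Role).

(* Were two of the [Rs i] outside [U], their disjoint complements would both be
   in [U], hence so would be their empty intersection. *)
Lemma outside_ultrafilter_unique n Rs (U : ultrafilter Role) i j :
  compl_partition n Rs -> i < n -> j < n ->
  ~ uf_mem U (Rs i) -> ~ uf_mem U (Rs j) -> i = j.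
Proof.
  intros [Hdisj _] Hi Hj HUi HUj. destruct (Nat.eq_dec i j) as [|Hij]; [assumption|].
  destruct (uf_prop U) as (_ & Hup & Hinter & Hult).
  destruct (Hult (Rs i)) as [|Hci]; [contradiction|].
  destruct (Hult (Rs j)) as [|Hcj]; [contradiction|].
  exfalso. apply HUi, (Hup _ _ (Hinter _ _ Hci Hcj)).
  intros r [Hr1 Hr2]. destruct (Hdisj i j r Hi Hj Hij Hr1 Hr2).
Qed.

Definition atom_data R a Gi := exists Q G',
  Permutation Gi (map (atomic a) Q ++ G') /\ is_partition (R :: Q).

(* What a derivation of [R:A, Gi] ending with a rule on [R:A] yields once its
   premises are cut against the other parties, [D] being the conclusion of the
   multicut. *)
Definition principal_data A R Gi D : Prop :=
  match A with
  | fatom a => atom_data R a Gi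
  | fneg f B => derivable ((preim f R, B) :: D)
  | fand U B C =>
      ~ uf_mem U R /\ (derivable ((R, B) :: D) \/ derivable ((R, C) :: D)) \/
      uf_mem U R /\ derivable ((R, B) :: D) /\ derivable ((R, C) :: D)
  | fimp f U B C =>
      ~ uf_mem U R /\ derivable ((preim f R, B) :: (R, C) :: D) \/
      uf_mem U R /\ derivable ((preim f R, B) :: D) /\ derivable ((R, C) :: D)
  | fall U B =>
      ~ uf_mem U R /\ (exists t, is_term t /\ derivable ((R, instantiate B t) :: D)) \/
      uf_mem U R /\ (forall t, is_term t -> derivable ((R, instantiate B t) :: D))
  end.

Lemma id_inversion R A k Gi a P G0 : P <> [] -> is_partition P ->
  Permutation (map (atomic a) P ++ G0) (repeat (R, A) (S k) ++ Gi) ->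
  (A = fatom a /\ atom_data R a Gi) \/ derivable Gi.
Proof.
  intros Hne Hpart HP.
  destruct (Permutation_app_repeat_inv _ _ _ _ _ HP)
    as (k1 & k2 & Ga & Gb & _ & HG & H1 & _).
  destruct k1 as [|k1].
  - right. eapply d_exch; [symmetry; exact HG|].
    eapply d_exch; [apply Permutation_app_tail; exact H1|]. now apply (d_id Gb P a).
  - left. assert (HR : In (R, A) (map (atomic a) P)) by (rewrite H1; now left).
    apply in_map_iff in HR as (R' & HR' & HRP). injection HR' as <- <-.
    split; [reflexivity|].
    apply in_split in HRP as (P1 & P2 & ->). rewrite map_app in H1. simpl in H1.
    symmetry in H1. apply Permutation_cons_app_inv in H1. rewrite <- map_app in H1.
    apply Permutation_map_inv in H1 as (P' & HP' & HPP').
    symmetry in HP'. apply map_eq_app in HP' as (Q1 & Q & -> & HQ1 & HQ).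
    exists Q, Gb. split.
    + rewrite HG, HQ. reflexivity.
    + apply (is_partition_drop_copies _ Q1).
      * intros R1 HR1. apply (in_map (atomic a)) in HR1. rewrite HQ1 in HR1.
        apply repeat_spec in HR1. now injection HR1.
      * eapply is_partition_perm; [|exact Hpart]. rewrite <- HPP'. psolve.
Qed.

Definition multicut_below A n Rs N := forall (Gs : nat -> sequent) (ks hs : nat -> nat),
  list_sum (map hs (seq 0 n)) < N ->
  (forall i, i < n -> hderivable (hs i) (repeat (Rs i, A) (ks i) ++ Gs i)) ->
  derivable (concat (map Gs (seq 0 n))).

Section Reduction.
Variables (A : formula) (n : nat) (Rs : nat -> rset Role) (N : nat).
Variables (Gs : nat -> sequent) (ks hs : nat -> nat).
Hypothesis IHN : multicut_below A n Rs N.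
Hypothesis HN : list_sum (map hs (seq 0 n)) < S N.
Hypothesis Hd : forall i, i < n -> hderivable (hs i) (repeat (Rs i, A) (ks i) ++ Gs i).
Notation D := (concat (map Gs (seq 0 n))).
Notation Rest i := (concat_except Gs n i).

(* Replacing party [i] by a premise of its last rule lowers the height sum. *)
Lemma reduce_premise i h k E G Ga : i < n -> h < hs i ->
  Permutation G (repeat (Rs i, A) k ++ Ga) -> hderivable h (E ++ G) ->
  derivable (E ++ Ga ++ Rest i).
Proof.
  intros Hi Hh HG H.
  rewrite app_assoc. eapply d_exch; [apply (concat_seq_upd Gs n i (E ++ Ga) Hi)|].
  apply (IHN _ (upd ks i k) (upd hs i h)); [pose proof (sum_upd_lt hs n i h Hi Hh); lia|].
  intros j Hj. destruct (Nat.eq_dec j i) as [->|Hji].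
  - rewrite !upd_eq. eapply hderivable_perm; [exact H|]. rewrite HG. psolve.
  - rewrite !upd_neq by exact Hji. now apply Hd.
Qed.

Lemma reduce_premise_principal i h k E G Ga Gb : i < n -> h < hs i ->
  Permutation G (repeat (Rs i, A) k ++ Ga) -> Permutation (Gs i) (Ga ++ Gb) ->
  hderivable h (E ++ G) -> derivable (E ++ D).
Proof.
  intros Hi Hh HG HGs H.
  eapply d_exch, derivable_weaken with (E := Gb), (reduce_premise i h k E G Ga); auto.
  rewrite (concat_seq_split Gs n i Hi), HGs. psolve.
Qed.

Lemma party_principal i h k Ps p G : i < n -> h < hs i ->
  mrl_rule Ps p G -> p = (Rs i, A) -> Permutation G (repeat (Rs i, A) k ++ Gs i) ->
  (forall P, In P Ps -> hderivable h P) ->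
  principal_data A (Rs i) (Gs i) D \/ derivable D.
Proof.
  intros Hi Hh Hr Hp HG HPs.
  assert (Hred : forall E, In (E ++ G) Ps -> derivable (E ++ D)).
  { intros E HE. apply (reduce_premise_principal i h k E G (Gs i) []); auto.
    now rewrite app_nil_r. }
  destruct Hr; injection Hp as -> HA; rewrite <- HA; simpl.
  - right. pose proof (HPs _ (or_introl eq_refl)) as Hprem. rewrite HA in Hprem.
    apply (reduce_premise_principal i h (S (S k)) [] _ (Gs i) []) in Hprem; auto.
    + simpl. now rewrite HG.
    + now rewrite app_nil_r.
  - left. apply (Hred [_]). now left.
  - left. left. split; [assumption|]. left. apply (Hred [_]). now left.
  - left. left. split; [assumption|]. right. apply (Hred [_]). now left.
  - left. right. split; [assumption|].
    split; [apply (Hred [_]); now left | apply (Hred [_]); right; now left].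
  - left. left. split; [assumption|]. apply (Hred [_; _]). now left.
  - left. right. split; [assumption|].
    destruct (Permutation_app_repeat_inv _ _ _ _ _ HG)
      as (k1 & k2 & Ga & Gb & _ & HGs & H1 & H2).
    split.
    + apply (reduce_premise_principal i h k1 [_] G1 Ga Gb); auto.
      apply HPs. now left.
    + apply (reduce_premise_principal i h k2 [_] G2 Gb Ga); auto.
      * now rewrite HGs, Permutation_app_comm.
      * apply HPs. right. now left.
  - left. left. split; [assumption|]. exists t. split; [assumption|].
    apply (Hred [_]). now left.
  - left. right. split; [assumption|]. intros t Ht.
    apply (reduce_premise_principal i h k [_] G (Gs i) []); auto; [now rewrite app_nil_r|].
    apply (hderivable_eigen _ _ _ x); auto. apply HPs. now left.
Qed.

Lemma party_side i h Ps p G G' : i < n -> h < hs i -> mrl_rule Ps p G ->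
  Permutation (Gs i) (p :: G') -> Permutation G (repeat (Rs i, A) (ks i) ++ G') ->
  (forall P, In P Ps -> hderivable h P) -> derivable D.
Proof.
  intros Hi Hh Hr HGs HG HPs.
  assert (HD : Permutation (p :: G' ++ Rest i) D).
  { rewrite (concat_seq_split Gs n i Hi), HGs. reflexivity. }
  assert (Hred : forall E, In (E ++ G) Ps -> derivable (E ++ G' ++ Rest i)).
  { intros E HE. apply (reduce_premise i h (ks i) E G G'); auto. }
  apply (d_exch _ _ HD).
  destruct Hr as [G R B|G R f B|G R U B C HU|G R U B C HU|G R U B C HU|G R f U B C HU
                 |G1 G2 R f U B C HU|G R U B t HU Ht|G R U B x HU HxG HxB].
  - apply d_weaken, (Hred [_; _]). now left.
  - apply d_neg, (Hred [_]). now left.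
  - apply d_and_neg_l, (Hred [_]); [assumption | now left].
  - apply d_and_neg_r, (Hred [_]); [assumption | now left].
  - apply d_and_pos; [assumption | apply (Hred [_]) | apply (Hred [_])]; simpl; auto.
  - apply d_imp_neg, (Hred [_; _]); [assumption | now left].
  - destruct (Permutation_app_repeat_inv _ _ _ _ _ HG)
      as (k1 & k2 & Ga & Gb & _ & HG' & H1 & H2).
    apply (derivable_contract (Rest i)).
    { intros q Hq. right. apply in_app_iff. now right. }
    eapply d_exch, (d_imp_pos (Ga ++ Rest i) (Gb ++ Rest i));
      [rewrite HG'; psolve | assumption | |].
    + apply (reduce_premise i h k1 [_] G1 Ga); auto. apply HPs. now left.
    + apply (reduce_premise i h k2 [_] G2 Gb); auto. apply HPs. right. now left.
  - eapply d_all_neg, (Hred [_]); [eassumption | eassumption | now left].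
  - destruct (exists_fresh ((R, B) :: D)) as [z Hz].
    rewrite occurs_seq_cons in Hz. simpl in Hz.
    apply (d_all_pos _ _ _ _ z HU).
    + intros Hocc. apply Hz. right. eapply occurs_seq_incl; [|exact Hocc].
      intros q Hq. rewrite <- HD. now right.
    + tauto.
    + apply (reduce_premise i h (ks i) [_] G G'); auto.
      apply (hderivable_eigen _ _ _ x); [exact I | assumption | assumption |].
      apply HPs. now left.
Qed.

Lemma party_step i : i < n -> 1 <= ks i ->
  principal_data A (Rs i) (Gs i) D \/ derivable D.
Proof.
  intros Hi Hk. destruct (ks i) as [|k] eqn:Ek; [lia|].
  pose proof (Hd i Hi) as H. rewrite Ek in H.
  inversion H as [h P a G0 D0 Hne Hpart HP|h Ps p G D0 Hr HPs HP]; subst.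
  - symmetry in HP. apply id_inversion in HP as [[-> Hdata]|HGs]; auto.
    right. eapply d_exch; [symmetry; apply (concat_seq_split Gs n i Hi)|].
    now apply derivable_weaken.
  - assert (Hh : h < hs i) by lia. symmetry in HP.
    apply Permutation_cons_repeat_inv in HP as [(Hp & _ & HG)|(G' & HGs & HG)].
    + eapply party_principal; eauto.
    + right. eapply party_side; eauto. now rewrite Ek.
Qed.

End Reduction.

Definition multicut_for B := forall n Rs (Gs : nat -> sequent),
  1 <= n -> compl_partition n Rs -> (forall i, i < n -> derivable ((Rs i, B) :: Gs i)) ->
  derivable (concat (map Gs (seq 0 n))).

Section PrincipalCases.
Variables (n : nat) (Rs : nat -> rset Role) (Gs : nat -> sequent).
Hypothesis Hn : 1 <= n.
Hypothesis Hpart : compl_partition n Rs.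
Notation D := (concat (map Gs (seq 0 n))).

Lemma multicut_upd_const B Rs' i0 L : multicut_for B -> compl_partition n Rs' -> i0 < n ->
  derivable ((Rs' i0, B) :: L ++ D) ->
  (forall j, j < n -> j <> i0 -> derivable ((Rs' j, B) :: D)) -> derivable (L ++ D).
Proof.
  intros HB Hpart' Hi0 H0 Hothers.
  apply (derivable_contract (concat_except (fun _ => D) n i0)).
  { intros q Hq. apply in_or_app. right. revert q Hq.
    apply incl_app; apply incl_concat_const. }
  eapply d_exch, (HB n Rs' (upd (fun _ => D) i0 (L ++ D))); auto.
  - rewrite (concat_seq_upd _ n i0 _ Hi0). psolve.
  - intros j Hj. destruct (Nat.eq_dec j i0) as [->|Hji].
    + now rewrite upd_eq.
    + rewrite upd_neq by exact Hji. now apply Hothers.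
Qed.

Lemma multicut_const B Rs' : multicut_for B -> compl_partition n Rs' ->
  (forall i, i < n -> derivable ((Rs' i, B) :: D)) -> derivable D.
Proof. intros HB Hpart' H. apply (multicut_upd_const B Rs' 0 []); auto. Qed.

Lemma principal_atom (r0 : Role) a :
  (forall i, i < n -> atom_data (Rs i) a (Gs i)) -> derivable D.
Proof.
  intros Hdata.
  destruct (finite_choice ([], []) n (fun i QG =>
      Permutation (Gs i) (map (atomic a) (fst QG) ++ snd QG) /\ is_partition (Rs i :: fst QG)))
    as [QG HQG].
  { intros i Hi. destruct (Hdata i Hi) as (Q & G' & HG & HQ). now exists (Q, G'). }
  set (Q := concat (map (fun i => fst (QG i)) (seq 0 n))).
  assert (HQ : is_partition Q).
  { apply (is_partition_concat n Rs); [exact Hpart|]. intros i Hi. apply HQG, Hi. }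
  assert (Hne : Q <> []).
  { intros HQnil. apply is_partition_iff in HQ as [_ Hcov].
    destruct (Hcov r0) as (R & HR & _). now rewrite HQnil in HR. }
  eapply d_exch, (d_id (concat (map (fun i => snd (QG i)) (seq 0 n))) Q a Hne HQ).
  unfold Q. rewrite concat_map, map_map, <- concat_map_app.
  apply concat_map_perm. intros i Hi. apply in_seq in Hi.
  symmetry. apply HQG. lia.
Qed.

Lemma principal_and U B C : multicut_for B -> multicut_for C ->
  (forall i, i < n -> principal_data (fand U B C) (Rs i) (Gs i) D) -> derivable D.
Proof.
  simpl. intros HB HC Hdata.
  destruct (classic (forall i, i < n -> derivable ((Rs i, B) :: D))) as [HBall|HBnot].
  { exact (multicut_const B Rs HB Hpart HBall). }
  apply not_all_ex_not in HBnot as [i0 HBnot]. apply imply_to_and in HBnot as [Hi0 HBi0].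
  assert (HU0 : ~ uf_mem U (Rs i0)) by (destruct (Hdata i0 Hi0); tauto).
  apply (multicut_const C Rs HC Hpart). intros j Hj.
  destruct (Hdata j Hj) as [(HUj & [HjB|HjC])|(_ & _ & HjC)]; [|exact HjC|exact HjC].
  now rewrite (outside_ultrafilter_unique n Rs U j i0 Hpart Hj Hi0 HUj HU0) in HjB.
Qed.

Lemma principal_imp f U B C : multicut_for B -> multicut_for C ->
  (forall i, i < n -> principal_data (fimp f U B C) (Rs i) (Gs i) D) -> derivable D.
Proof.
  simpl. intros HB HC Hdata.
  destruct (classic (exists i0, i0 < n /\ ~ uf_mem U (Rs i0))) as [(i0 & Hi0 & HU0)|Hall].
  - assert (Hothers : forall j, j < n -> j <> i0 ->
              derivable ((preim f (Rs j), B) :: D) /\ derivable ((Rs j, C) :: D)).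
    { intros j Hj Hji. destruct (Hdata j Hj) as [(HUj & _)|(_ & H)]; [|exact H].
      destruct Hji. exact (outside_ultrafilter_unique n Rs U j i0 Hpart Hj Hi0 HUj HU0). }
    assert (HB0 : derivable ((preim f (Rs i0), B) :: D)).
    { apply (multicut_upd_const C Rs i0 [_]); auto.
      - destruct (Hdata i0 Hi0) as [(_ & H)|(HU & _)]; [|contradiction].
        eapply d_exch, H. apply perm_swap.
      - intros j Hj Hji. now apply Hothers. }
    apply (multicut_const B (fun i => preim f (Rs i)) HB (compl_partition_preim n Rs f Hpart)).
    intros j Hj. destruct (Nat.eq_dec j i0) as [->|Hji]; [exact HB0 | now apply Hothers].
  - apply (multicut_const C Rs HC Hpart). intros j Hj.
    destruct (Hdata j Hj) as [(HUj & _)|(_ & _ & H)]; [|exact H].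
    exfalso. apply Hall. eauto.
Qed.

Lemma principal_all U B : (forall t, multicut_for (instantiate B t)) ->
  (forall i, i < n -> principal_data (fall U B) (Rs i) (Gs i) D) -> derivable D.
Proof.
  simpl. intros HB Hdata.
  destruct (classic (exists i0, i0 < n /\ ~ uf_mem U (Rs i0))) as [(i0 & Hi0 & HU0)|Hall].
  - destruct (Hdata i0 Hi0) as [(_ & t & Ht & H0)|(HU & _)]; [|contradiction].
    apply (multicut_const _ Rs (HB t) Hpart). intros j Hj.
    destruct (Nat.eq_dec j i0) as [->|Hji]; [exact H0|].
    destruct (Hdata j Hj) as [(HUj & _)|(_ & H)]; [|now apply H].
    destruct Hji. exact (outside_ultrafilter_unique n Rs U j i0 Hpart Hj Hi0 HUj HU0).
  - apply (multicut_const _ Rs (HB (tfvar 0)) Hpart). intros j Hj.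
    destruct (Hdata j Hj) as [(HUj & _)|(_ & H)]; [exfalso; apply Hall; eauto|].
    apply H. exact I.
Qed.

Lemma principal_parties (r0 : Role) A : (forall B, fsize B < fsize A -> multicut_for B) ->
  (forall i, i < n -> principal_data A (Rs i) (Gs i) D) -> derivable D.
Proof.
  intros IH Hdata. destruct A as [a|f B|U B C|f U B C|U B]; simpl in IH.
  - exact (principal_atom r0 a Hdata).
  - apply (multicut_const B _ (IH B ltac:(lia)) (compl_partition_preim n Rs f Hpart)), Hdata.
  - apply (principal_and U B C); auto; apply IH; lia.
  - apply (principal_imp f U B C); auto; apply IH; lia.
  - apply (principal_all U B); auto. intros t. apply IH. rewrite fsize_instantiate. lia.
Qed.

End PrincipalCases.

Lemma multicut_below_all (r0 : Role) A n Rs :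
  (forall B, fsize B < fsize A -> multicut_for B) -> 1 <= n -> compl_partition n Rs ->
  forall N, multicut_below A n Rs N.
Proof.
  intros IH Hn Hpart N. induction N as [|N IHN]; intros Gs ks hs HN Hd; [lia|].
  destruct (classic (exists i, i < n /\ ks i = 0)) as [(i & Hi & Hk)|Hpos].
  - pose proof (Hd i Hi) as Hdi. rewrite Hk in Hdi.
    eapply d_exch; [symmetry; apply (concat_seq_split Gs n i Hi)|].
    exact (derivable_weaken _ _ (hderivable_derivable _ _ Hdi)).
  - destruct (classic (derivable (concat (map Gs (seq 0 n))))) as [HD|HnD]; [exact HD|].
    apply (principal_parties n Rs Gs Hn Hpart r0 A IH). intros i Hi.
    destruct (party_step A n Rs N Gs ks hs IHN HN Hd i Hi) as [H|H]; [| |contradiction].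
    + destruct (ks i) eqn:Hk; [|lia]. exfalso. apply Hpos. eauto.
    + exact H.
Qed.

Theorem multicut (r0 : Role) A : multicut_for A.
Proof.
  induction A as [A IH] using (well_founded_induction (well_founded_ltof _ fsize)).
  intros n Rs Gs Hn Hpart Hder.
  destruct (finite_choice 0 n (fun i h => hderivable h ((Rs i, A) :: Gs i))) as [hs Hhs].
  { intros i Hi. now apply derivable_hderivable, Hder. }
  apply (multicut_below_all r0 A n Rs IH Hn Hpart (S (list_sum (map hs (seq 0 n))))
           Gs (fun _ => 1) hs); auto.
Qed.

End Multicut.

Theorem mainTheorem7 (Role fsym psym : Type) (Hne : inhabited Role)
  (n : nat) (Hn : 1 <= n)
  (Rs : nat -> rset Role)
  (Gs : nat -> sequent Role fsym psym)
  (A : formula Role fsym psym)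
  (Hdisj : forall i j r, i < n -> j < n -> i <> j ->
             rcompl (Rs i) r -> rcompl (Rs j) r -> False)
  (Hcover : forall r, exists i, i < n /\ rcompl (Rs i) r)
  (HA : is_formula A)
  (HG : forall i, i < n -> forall p, In p (Gs i) -> is_formula (snd p))
  (Hder : forall i, i < n -> derivable ((Rs i, A) :: Gs i)) :
  derivable (concat (map Gs (seq 0 n))).
Proof.
  destruct Hne as [r0].
  exact (multicut r0 A n Rs Gs Hn (conj Hdisj Hcover) Hder).
Qed.
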